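(* Let $\mathcal A$ be finite, and assume the margin condition with parameter $\nu\in(0,\infty]$ and the policy overlap condition with constant $\beta_0>0$. Let $\pi^\star(a\mid x)=\mathbf 1\{a=a^\star(x)\}$. Then: (i) if $\nu\in(0,\infty)$, for every policy $\pi$ satisfying overlap, \[ \operatorname{Var}_{X\sim P_X,A\sim\pi(\cdot\mid X)}\Big(\frac{\pi^\star(A\mid X)}{\pi(A\mid X)}\Big)\le\frac{K}{\beta_0}\big(R^\star(\pi)-R^\star(\pi^\star)\big)^{\nu/(\nu+1)},\qquad K=\Big(\frac{(\nu+1)^{(\nu+1)/\nu}\,c}{\nu M}\Big)^{\nu/(\nu+1)}; \] (ii) if $\nu=\infty$, the same variance is at most $\frac{1}{\beta_0Mu_0}\big(R^\star(\pi)-R^\star(\pi^\star)\big)$.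
   Context: Contexts $X\sim P_X$ on $\mathcal X$, finite action set $\mathcal A$, outcome (loss) $Y\sim P_Y(\cdot\mid X,A)$ with $\mu(x,a)=\mathbb E[Y\mid X=x,A=a]$. $\mu^\star(x)=\min_{a\in\mathcal A}\mu(x,a)$, attained at $a^\star(x)$, and $\Delta_{\min}(x)=\min_{a\ne a^\star(x)}\mu(x,a)-\mu^\star(x)\ge0$. For a policy $\pi$, $R^\star(\pi)=\mathbb E_{X\sim P_X,A\sim\pi(\cdot\mid X)}[\mu(X,A)]$. Margin condition (parameter $\nu$, constants $M,c>0$): for $\nu\in(0,\infty)$, $\Pr(\Delta_{\min}(X)\le Mu)\le(cu)^\nu$ for all $u\ge0$; for $\nu=\infty$, there is $u_0>0$ with $\Pr(\Delta_{\min}(X)\le Mu_0)=0$. Policy overlap: $\pi(a^\star(x)\mid x)\ge\beta_0$ for all $x\in\mathcal X$. *)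

From HB Require Import structures.
From mathcomp Require Import all_boot all_order all_algebra.
From mathcomp Require Import all_classical all_reals all_analysis.
Set Implicit Arguments. Unset Strict Implicit. Unset Printing Implicit Defensive.
Import Order.TTheory GRing.Theory Num.Theory.
Local Open Scope classical_set_scope.
Local Open Scope ring_scope.

Section Defs.
Context {d : measure_display} {X : measurableType d} {R : realType} {A : finType}.

Definition pistar (astar : X -> A) (x : X) (a : A) : R :=
  if a == astar x then 1 else 0.

Definition Ejoint (P : probability X R) (pi : X -> A -> R) (f : X -> A -> R) : R :=
  Rintegral P setT (fun x => \sum_(a : A) pi x a * f x a).

Definition Varjoint (P : probability X R) (pi : X -> A -> R) (f : X -> A -> R) : R :=
  Ejoint P pi (fun x a => f x a ^+ 2) - (Ejoint P pi f) ^+ 2.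

Definition Rstar (P : probability X R) (mu : X -> A -> R) (pi : X -> A -> R) : R :=
  Ejoint P pi mu.

Definition Delta_min (mu : X -> A -> R) (astar : X -> A) (x : X) : \bar R :=
  \big[Order.min/+oo%E]_(a | a != astar x) ((mu x a - mu x (astar x))%:E).

Definition is_policy (pi : X -> A -> R) : Prop :=
  (forall x a, 0 <= pi x a) /\ (forall x, \sum_(a : A) pi x a = 1) /\
  (forall a, measurable_fun setT (fun x => pi x a)).

Definition margin_fin (P : probability X R) (mu : X -> A -> R) (astar : X -> A)
  (nu M c : R) : Prop :=
  forall u : R, 0 <= u ->
    (P [set x | (Delta_min mu astar x <= (M * u)%:E)%E] <= ((c * u) `^ nu)%:E)%E.

Definition margin_inf (P : probability X R) (mu : X -> A -> R) (astar : X -> A)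
  (M u0 : R) : Prop :=
  0 < u0 /\ P [set x | (Delta_min mu astar x <= (M * u0)%:E)%E] = 0%E.

Definition overlap (astar : X -> A) (beta0 : R) (pi : X -> A -> R) : Prop :=
  forall x, beta0 <= pi x (astar x).

End Defs.

From HB Require Import structures.
From mathcomp Require Import all_boot all_order all_algebra.
From mathcomp Require Import all_classical all_reals all_analysis.
From mathcomp Require Import measurable_realfun.
From mathcomp Require Import ring lra.
Set Implicit Arguments. Unset Strict Implicit. Unset Printing Implicit Defensive.
Import Order.TTheory GRing.Theory Num.Theory.
Local Open Scope classical_set_scope.
Local Open Scope ring_scope.

(* Since pistar(.|x) is the point mass at a*(x), the ratio has mean 1 and
   second moment E[1 / p(X)] with p(x) = pi(a*(x)|x), so the variance is
   E[(1 - p) / p], which overlap bounds by E[1 - p] / beta0.  For every scale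
   u > 0 the probability 1 - p(x) of a suboptimal action is at most the
   indicator of the near-tie event {Delta_min <= M u} plus the pointwise regret
   divided by M u; taking expectations, the margin condition bounds the variance
   by ((c u)^nu + D / (M u)) / beta0, where D = Rstar(pi) - Rstar(pistar).
   Minimising over u gives (i), and u = u0 gives (ii). *)

Section MarginTradeoff.
Variable R : realType.

Lemma powRE (a x : R) : 0 < a -> a `^ x = expR (x * ln a).
Proof. by move=> a0; rewrite /powR gt_eqF. Qed.

(* The witness is the minimiser of the trade-off, u^(nu+1) = D / (nu M c^nu);
   the computation is carried out on logarithms. *)
Lemma tradeoff_min_value (nu M c D : R) : 0 < nu -> 0 < M -> 0 < c -> 0 < D ->
  exists2 u, 0 < u & (c * u) `^ nu + D / (M * u) =
   ((((nu + 1) `^ ((nu + 1) / nu) * c) / (nu * M)) `^ (nu / (nu + 1)))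
       * D `^ (nu / (nu + 1)).
Proof.
move=> nu0 M0 c0 D0.
have [a ->] : exists a, c = expR a by exists (ln c); rewrite lnK.
have [b ->] : exists b, M = expR b by exists (ln M); rewrite lnK.
have [e ->] : exists e, D = expR e by exists (ln D); rewrite lnK.
have en : nu = expR (ln nu) by rewrite lnK.
have ek : nu + 1 = expR (ln (nu + 1)) by rewrite lnK // posrE; lra.
set n := ln nu in en; set k := ln (nu + 1) in ek.
pose l := (e - n - b - nu * a) / (nu + 1).
exists (expR l); first exact: expR_gt0.
have nu1 : nu + 1 != 0 by rewrite gt_eqF //; lra.
have nu_neq0 : nu != 0 by rewrite gt_eqF.
rewrite -expRD powRE ?expR_gt0 // expRK -expRD -expRN -expRD.
rewrite {1}ek (@powRE (expR k) _ (expR_gt0 k)) expRK [X in X * expR b]en.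
rewrite -[expR n * expR b]expRD -expRN -!expRD.
rewrite powRE ?expR_gt0 // expRK powRE ?expR_gt0 // expRK -expRD.
have -> : e - (b + l) = nu * (a + l) + n by rewrite /l; field.
have -> : nu / (nu + 1) * ((nu + 1) / nu * k + a - (n + b)) + nu / (nu + 1) * e
   = nu * (a + l) + k by rewrite /l; field; rewrite nu1 nu_neq0.
by rewrite !expRD -en -ek; ring.
Qed.

Lemma le_tradeoff_bound (V D nu M c beta0 : R) :
  0 < nu -> 0 < M -> 0 < c -> 0 < beta0 -> 0 <= D ->
  (forall u, 0 < u -> V <= beta0^-1 * ((c * u) `^ nu + D / (M * u))) ->
  V <= ((((nu + 1) `^ ((nu + 1) / nu) * c) / (nu * M)) `^ (nu / (nu + 1))) / beta0
       * D `^ (nu / (nu + 1)).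
Proof.
move=> nu0 M0 c0 beta0_gt0; rewrite le_eqVlt => /orP[/eqP<- | D0] V_le; last first.
  have [u u0 opt] := tradeoff_min_value nu0 M0 c0 D0.
  by apply: (le_trans (V_le u u0)); rewrite opt mulrA [beta0^-1 * _]mulrC.
rewrite powR0 ?mulr0; last by rewrite gt_eqF // divr_gt0 //; lra.
apply/ler_addgt0Pr => eps eps0; rewrite add0r.
(* with D = 0, the choice (c u)^nu = beta0 eps makes the bound exactly eps *)
pose u := (beta0 * eps) `^ nu^-1 / c.
have u0 : 0 < u by rewrite divr_gt0 // powR_gt0 // mulr_gt0.
apply: (le_trans (V_le u u0)).
rewrite /u [c * _]mulrC divfK ?gt_eqF // -powRrM mulVf ?gt_eqF // powRr1;
  last by rewrite ltW // mulr_gt0.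
by rewrite mul0r addr0 mulrA mulVf ?gt_eqF // mul1r.
Qed.

End MarginTradeoff.

Lemma sum_single (V : nmodType) (I : finType) (F : I -> V) (i : I) :
  (forall j, j != i -> F j = 0) -> \sum_j F j = F i.
Proof. by move=> F0; rewrite (bigD1 i) //= big1 ?addr0 // => j /F0. Qed.
Arguments sum_single {V I F} i.

Section RealIntegrable.
Context d (T : measurableType d) (R : realType).
Variable mu : {measure set T -> \bar R}.

Local Notation integrable f := (mu.-integrable setT (EFin \o f)).

Lemma EFin_integrableD (f g : T -> R) :
  integrable f -> integrable g -> integrable (fun x => f x + g x).
Proof.
move=> fi gi; apply: (eq_integrable measurableT ((EFin \o f) \+ (EFin \o g))).
  by move=> x _ /=; rewrite EFinD.
exact: integrableD.
Qed.

Lemma EFin_integrableB (f g : T -> R) :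
  integrable f -> integrable g -> integrable (fun x => f x - g x).
Proof.
move=> fi gi; apply: (eq_integrable measurableT ((EFin \o f) \- (EFin \o g))%E).
  by move=> x _ /=; rewrite EFinB.
exact: integrableB.
Qed.

Lemma EFin_integrableZl (k : R) (f : T -> R) :
  integrable f -> integrable (fun x => k * f x).
Proof.
move=> fi; apply: (eq_integrable measurableT (fun x => k%:E * (EFin \o f) x)%E).
  by move=> x _ /=; rewrite EFinM.
exact: integrableZl.
Qed.

Lemma EFin_integrableZr (k : R) (f : T -> R) :
  integrable f -> integrable (fun x => f x * k).
Proof.
move=> fi; apply: (eq_integrable measurableT (EFin \o (fun x => k * f x))).
  by move=> x _ /=; rewrite mulrC.
exact: EFin_integrableZl.
Qed.

Lemma EFin_integrable_sum (I : finType) (F : I -> T -> R) :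
  (forall i, integrable (F i)) -> integrable (fun x => \sum_i F i x).
Proof.
move=> Fi; apply: (eq_integrable measurableT (fun x => \sum_(i <- enum I) (EFin \o F i) x)).
  by move=> x _ /=; rewrite sumEFin big_enum.
exact: integrable_sum.
Qed.

End RealIntegrable.

Lemma measurable_fun_le_set d (T : measurableType d) (R : realType)
    (f : T -> R) (t : R) :
  measurable_fun setT f -> measurable [set x | f x <= t].
Proof.
move=> mf; have := mf measurableT _ (measurable_itv `]-oo, t]).
by rewrite setTI; congr measurable; apply/seteqP; split => x /=; rewrite in_itv.
Qed.

Section Propensity.
Context {d : measure_display} {X : measurableType d} {R : realType} {A : finType}.
(* The space in [{ pi] avoids the generic_quotient notation [{pi a}]. *)
Context {mu : X -> A -> R} {astar : X -> A} {beta0 M : R} { pi : X -> A -> R }.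

Lemma sum_pistar_mul (F : A -> R) x : \sum_a pistar astar x a * F a = F (astar x).
Proof.
rewrite (sum_single (astar x)) /pistar ?eqxx ?mul1r // => a /negbTE ->.
by rewrite mul0r.
Qed.

Definition near_tie (u : R) : set X :=
  [set x | exists2 a, a != astar x & mu x a - mu x (astar x) <= M * u].

Lemma near_tieE u : near_tie u = [set x | (Delta_min mu astar x <= (M * u)%:E)%E].
Proof.
apply/seteqP; split => x /=.
  case=> a aNstar gap_le; rewrite /Delta_min.
  by apply: (Order.TotalTheory.bigmin_inf a) => //; rewrite lee_fin.
case/bigmin_leP => [|[a aNstar]]; first by rewrite leNgt ltey.
by exists a => //; rewrite -lee_fin.
Qed.

Definition pt_regret x := \sum_a pi x a * mu x a - mu x (astar x).

Hypothesis astar_opt : forall x a, mu x (astar x) <= mu x a.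
Hypothesis M_gt0 : 0 < M.
Hypothesis beta0_gt0 : 0 < beta0.
Hypothesis pi_policy : is_policy pi.
Hypothesis pi_overlap : overlap astar beta0 pi.

Lemma pi_ge0 x a : 0 <= pi x a.
Proof. by case: pi_policy => pi0 _; exact: pi0. Qed.

Lemma pi_sum1 x : \sum_a pi x a = 1.
Proof. by case: pi_policy => _ [pi1 _]; exact: pi1. Qed.

Lemma pi_le1 x a : pi x a <= 1.
Proof.
rewrite -(pi_sum1 x) (bigD1 a) //= lerDl.
by apply: sumr_ge0 => i _; exact: pi_ge0.
Qed.

Lemma propensity_gt0 x : 0 < pi x (astar x).
Proof. exact: lt_le_trans beta0_gt0 (pi_overlap x). Qed.

Lemma one_sub_propensity x : 1 - pi x (astar x) = \sum_(a | a != astar x) pi x a.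
Proof. by rewrite -(pi_sum1 x) (bigD1 (astar x)) //= addrC addrK. Qed.

Lemma sum_pi_ratio x : \sum_a pi x a * (pistar astar x a / pi x a) = 1.
Proof.
rewrite (sum_single (astar x)) /pistar ?eqxx; last first.
  by move=> a /negbTE ->; rewrite mul0r mulr0.
by rewrite mul1r divff // gt_eqF // propensity_gt0.
Qed.

Lemma sum_pi_ratio_sq x :
  \sum_a pi x a * (pistar astar x a / pi x a) ^+ 2 = (pi x (astar x))^-1.
Proof.
rewrite (sum_single (astar x)) /pistar ?eqxx; last first.
  by move=> a /negbTE ->; rewrite mul0r expr0n mulr0.
by rewrite mul1r expr2 mulrA divff ?mul1r // gt_eqF // propensity_gt0.
Qed.

Lemma pt_regretE x :
  pt_regret x = \sum_(a | a != astar x) pi x a * (mu x a - mu x (astar x)).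
Proof.
rewrite /pt_regret -[X in _ - X]mul1r -(pi_sum1 x) mulr_suml -sumrB.
by rewrite (bigD1 (astar x)) //= subrr add0r; apply: eq_bigr => a _; rewrite mulrBr.
Qed.

Lemma pt_regret_ge0 x : 0 <= pt_regret x.
Proof.
by rewrite pt_regretE; apply: sumr_ge0 => a _; rewrite mulr_ge0 ?pi_ge0 ?subr_ge0.
Qed.

Lemma inv_propensity_sub1_le x :
  (pi x (astar x))^-1 - 1 <= beta0^-1 * (1 - pi x (astar x)).
Proof.
have p0 := propensity_gt0 x.
have -> : (pi x (astar x))^-1 - 1 = (1 - pi x (astar x)) * (pi x (astar x))^-1.
  by field; rewrite gt_eqF.
rewrite mulrC ler_wpM2r ?lef_pV2 ?posrE ?pi_overlap // one_sub_propensity.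
by apply: sumr_ge0 => a _; exact: pi_ge0.
Qed.

(* Off the near-tie event every suboptimal action has gap > M u, so its
   probability is at most its contribution to the regret divided by M u. *)
Lemma one_sub_propensity_le x u : 0 < u ->
  1 - pi x (astar x) <= \1_(near_tie u) x + pt_regret x / (M * u).
Proof.
move=> u0; have Mu0 : 0 < M * u by rewrite mulr_gt0.
rewrite /indic; have [_ | notie] := boolP (x \in near_tie u) => /=.
  have regret0 : 0 <= pt_regret x / (M * u) by rewrite divr_ge0 ?pt_regret_ge0 ?ltW.
  apply: (@le_trans _ _ 1); last by rewrite lerDl.
  by rewrite lerBlDr lerDl ltW ?propensity_gt0.
rewrite add0r one_sub_propensity pt_regretE mulr_suml; apply: ler_sum => a aNstar.
rewrite -mulrA ler_peMr ?pi_ge0 // ler_pdivlMr // mul1r leNgt; apply/negP => gap_lt.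
by move/negP: notie; apply; rewrite inE; exists a => //; exact: ltW.
Qed.

Lemma inv_propensity_le x u : 0 < u ->
  (pi x (astar x))^-1 <= 1 + beta0^-1 * (\1_(near_tie u) x + pt_regret x / (M * u)).
Proof.
move=> u0; rewrite -lerBlDl; apply: le_trans (inv_propensity_sub1_le x) _.
by rewrite ler_wpM2l ?invr_ge0 ?(ltW beta0_gt0) ?one_sub_propensity_le.
Qed.

End Propensity.
Arguments near_tie {d X R A} mu astar M u.
Arguments pt_regret {d X R A} mu astar pi x.

Lemma Rintegral_probability1 d (T : measurableType d) (R : realType) (P : probability T R) :
  Rintegral P setT (fun _ => 1 : R) = 1.
Proof. by rewrite Rintegral_cst // mul1r; exact: (congr1 fine (probability_setT P)). Qed.

Lemma Rintegral_indic d (T : measurableType d) (R : realType)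
    (mu : {measure set T -> \bar R}) (S : set T) :
  measurable S -> Rintegral mu setT (\1_S : T -> R) = fine (mu S).
Proof. by move=> mS; rewrite /Rintegral integral_indic // setIT. Qed.

Section Variance.
Context {d : measure_display} {X : measurableType d} {R : realType} {A : finType}.
Context {P : probability X R} {mu : X -> A -> R} {astar : X -> A} {beta0 M : R}.
Context { pi : X -> A -> R }.

Local Notation integrable f := (P.-integrable setT (EFin \o f)).

Hypothesis mu_integrable : forall a, P.-integrable setT (fun x => (mu x a)%:E).
Hypothesis astar_measurable : forall a, measurable [set x | astar x = a].
Hypothesis astar_opt : forall x a, mu x (astar x) <= mu x a.
Hypothesis M_gt0 : 0 < M.
Hypothesis beta0_gt0 : 0 < beta0.
Hypothesis pi_policy : is_policy pi.
Hypothesis pi_overlap : overlap astar beta0 pi.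

Lemma measurable_mu a : measurable_fun setT (fun x => mu x a).
Proof. exact/measurable_EFinP/(measurable_int _ (mu_integrable a)). Qed.

Lemma measurable_pi a : measurable_fun setT (fun x => pi x a).
Proof. by case: pi_policy => _ [_ mpi]; exact: mpi. Qed.

Lemma measurable_pistar a : measurable_fun setT (fun x => pistar astar x a : R).
Proof.
rewrite (_ : (fun x => _) = \1_[set x | astar x = a]); first exact: measurable_indic.
apply/funext => x; rewrite /pistar /indic.
have [/set_mem <- | notin] := boolP (x \in _); first by rewrite eqxx.
by case: eqP => // eq_a; case/negP: notin; exact/mem_set.
Qed.

Lemma measurable_near_tie u : measurable (near_tie mu astar M u).
Proof.
have -> : near_tie mu astar M u = \bigcup_(b in [set: A]) ([set x | astar x = b] `&`
   \bigcup_(a in [set a | a != b]) [set x | mu x a - mu x b <= M * u]).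
  apply/seteqP; split => x /=.
    by case=> a aNstar gap_le; exists (astar x) => //; split => //; exists a.
  by case=> b _ [<- [a /= aNstar gap_le]]; exists a.
apply: fin_bigcup_measurable => [|b _]; first exact: finite_finset.
apply: measurableI; first exact: astar_measurable.
apply: fin_bigcup_measurable => [|a _]; first exact: finite_finset.
by apply/measurable_fun_le_set/measurable_funB; exact: measurable_mu.
Qed.

Lemma measurable_inv_propensity : measurable_fun setT (fun x => (pi x (astar x))^-1).
Proof.
have mp : measurable_fun setT (fun x => pi x (astar x)).
  under eq_fun do rewrite -(sum_pistar_mul (pi _)).
  by apply: measurable_sum => a; apply: measurable_funM;
    [exact: measurable_pistar | exact: measurable_pi].
have inv_cont : measurable_fun (`]0, +oo[%classic : set R) GRing.inv.
  apply: open_continuous_measurable_fun; first exact: interval_open.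
  by move=> y; rewrite inE /= in_itv /= andbT => y0; apply: inv_continuous; rewrite gt_eqF.
apply: (measurable_comp (measurable_itv _) _ inv_cont mp).
by move=> _ [x _ <-]; rewrite /= in_itv /= andbT (propensity_gt0 beta0_gt0 pi_overlap).
Qed.

Lemma integrable_inv_propensity : integrable (fun x => (pi x (astar x))^-1).
Proof.
apply: (le_integrable measurableT _ _ (finite_measure_integrable_cst P beta0^-1 measurableT)).
  exact/measurable_EFinP/measurable_inv_propensity.
move=> x _ /=; have p0 := propensity_gt0 beta0_gt0 pi_overlap x.
rewrite lee_fin /= ger0_norm ?invr_ge0 ?(ltW p0) // ger0_norm ?invr_ge0 ?(ltW beta0_gt0) //.
by rewrite lef_pV2 ?posrE.
Qed.

Lemma integrable_weighted_mu (w : X -> A -> R) a :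
  (forall x, 0 <= w x a <= 1) -> measurable_fun setT (fun x => w x a) ->
  integrable (fun x => w x a * mu x a).
Proof.
move=> w01 mw; apply: (le_integrable measurableT _ _ (mu_integrable a)).
  exact/measurable_EFinP/measurable_funM/measurable_mu.
move=> x _ /=; have /andP[w0 w1] := w01 x.
by rewrite lee_fin normrM ler_piMl // ger0_norm.
Qed.

Lemma integrable_Rstar_pi : integrable (fun x => \sum_a pi x a * mu x a).
Proof.
apply: EFin_integrable_sum => a; apply: integrable_weighted_mu (measurable_pi a) => x.
by rewrite (pi_ge0 pi_policy) (pi_le1 pi_policy).
Qed.

Lemma integrable_Rstar_pistar : integrable (fun x => \sum_a pistar astar x a * mu x a).
Proof.
apply: EFin_integrable_sum => a; apply: integrable_weighted_mu (measurable_pistar a) => x.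
by rewrite /pistar; case: ifP => _; rewrite lexx ler01.
Qed.

Lemma integrable_pt_regret : integrable (pt_regret mu astar pi).
Proof.
apply: (eq_integrable measurableT (EFin \o (fun x => \sum_a pi x a * mu x a
                                          - \sum_a pistar astar x a * mu x a))).
  by move=> x _ /=; rewrite sum_pistar_mul.
exact: EFin_integrableB integrable_Rstar_pi integrable_Rstar_pistar.
Qed.

Lemma Rstar_subE : Rstar P mu pi - Rstar P mu (pistar astar) =
  Rintegral P setT (pt_regret mu astar pi).
Proof.
rewrite /Rstar /Ejoint -RintegralB //;
  [|exact: integrable_Rstar_pi|exact: integrable_Rstar_pistar].
by apply: eq_Rintegral => x _; rewrite sum_pistar_mul.
Qed.

Lemma Rstar_sub_ge0 : 0 <= Rstar P mu pi - Rstar P mu (pistar astar).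
Proof.
rewrite Rstar_subE Rintegral_ge0 // => x _.
exact: pt_regret_ge0 astar_opt pi_policy x.
Qed.

Lemma Varjoint_ratioE : Varjoint P pi (fun x a => pistar astar x a / pi x a) =
  Rintegral P setT (fun x => (pi x (astar x))^-1) - 1.
Proof.
rewrite /Varjoint /Ejoint -[in RHS](expr1n _ 2) -[in RHS](Rintegral_probability1 P).
congr (_ - _ ^+ 2); apply: eq_Rintegral => x _.
  exact: sum_pi_ratio_sq beta0_gt0 pi_overlap x.
exact: sum_pi_ratio beta0_gt0 pi_overlap x.
Qed.

Lemma Varjoint_ratio_le u : 0 < u ->
  Varjoint P pi (fun x a => pistar astar x a / pi x a) <=
  beta0^-1 * (fine (P (near_tie mu astar M u)) +
              (Rstar P mu pi - Rstar P mu (pistar astar)) / (M * u)).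
Proof.
move=> u0; set S := near_tie mu astar M u.
have regret_int := integrable_pt_regret.
have ind_int : integrable (\1_S : X -> R) by exact: integrable_indic (measurable_near_tie u).
have scaled_int := EFin_integrableZr (M * u)^-1 regret_int.
have sum_int := EFin_integrableD ind_int scaled_int.
have bound_int := EFin_integrableZl beta0^-1 sum_int.
have one_int : integrable (fun _ => 1 : R) by exact: finite_measure_integrable_cst.
rewrite Varjoint_ratioE lerBlDl.
apply: le_trans (le_Rintegral measurableT integrable_inv_propensity
  (EFin_integrableD one_int bound_int)
  (fun x _ => inv_propensity_le astar_opt M_gt0 beta0_gt0 pi_policy pi_overlap x u0)) _.
rewrite RintegralD // Rintegral_probability1 RintegralZl // RintegralD //.
rewrite Rintegral_indic; last exact: measurable_near_tie.
by rewrite RintegralZr // Rstar_subE.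
Qed.

End Variance.

Theorem mainTheorem6 (d : measure_display) (X : measurableType d) (R : realType)
  (A : finType) (P : probability X R) (mu : X -> A -> R) (astar : X -> A)
  (M c beta0 : R) :
  (forall a, P.-integrable setT (fun x => (mu x a)%:E)) ->
  (forall a, measurable [set x | astar x = a]) ->
  (forall x a, mu x (astar x) <= mu x a) ->
  0 < M -> 0 < c -> 0 < beta0 ->
  (* (i) nu in (0, oo) *)
  (forall nu : R, 0 < nu -> margin_fin P mu astar nu M c ->
     forall pi : X -> A -> R, is_policy pi -> overlap astar beta0 pi ->
     Varjoint P pi (fun x a => pistar astar x a / pi x a) <=
       ((((nu + 1) `^ ((nu + 1) / nu) * c) / (nu * M)) `^ (nu / (nu + 1))) / beta0
       * (Rstar P mu pi - Rstar P mu (pistar astar)) `^ (nu / (nu + 1)))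
  /\
  (* (ii) nu = oo *)
  (forall u0 : R, margin_inf P mu astar M u0 ->
     forall pi : X -> A -> R, is_policy pi -> overlap astar beta0 pi ->
     Varjoint P pi (fun x a => pistar astar x a / pi x a) <=
       (beta0 * M * u0)^-1 * (Rstar P mu pi - Rstar P mu (pistar astar))).
Proof.
move=> mu_int astar_meas astar_opt M0 c0 beta0_gt0; split.
- move=> nu nu0 margin pi pi_policy pi_overlap.
  apply: le_tradeoff_bound => //; first exact: Rstar_sub_ge0.
  move=> u u0; apply: (le_trans (Varjoint_ratio_le mu_int astar_meas astar_opt
    M0 beta0_gt0 pi_policy pi_overlap u0)).
  apply: ler_wpM2l; first by rewrite invr_ge0 ltW.
  rewrite lerD2r.
  have := margin u (ltW u0); rewrite -near_tieE => tie_le.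
  by rewrite -lee_fin fineK // ge0_fin_numE ?measure_ge0 // (le_lt_trans tie_le) ?ltry.
- move=> u0 [u0_gt0 no_tie] pi pi_policy pi_overlap.
  apply: (le_trans (Varjoint_ratio_le mu_int astar_meas astar_opt
    M0 beta0_gt0 pi_policy pi_overlap u0_gt0)).
  rewrite near_tieE no_tie /= add0r le_eqVlt; apply/orP; left; apply/eqP.
  by field; rewrite !gt_eqF.
Qed.
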